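(* Let $(\mathcal S,\mathcal C,\mathcal R,\mathcal K)$ be a deterministic reaction network system with species set $\mathcal S$ containing a species $X_1$, and let $(\hat{\mathcal S},\hat{\mathcal C},\hat{\mathcal R},\hat{\mathcal K})$ be a $Z$-definite ACR system with $X_1\in\hat{\mathcal S}$ and $Z\notin\mathcal S$. If the union system of $(\mathcal S,\mathcal C,\mathcal R,\mathcal K)$ and $(\hat{\mathcal S},\hat{\mathcal C},\hat{\mathcal R},\hat{\mathcal K})$ admits a positive steady state, then the union system is an ACR system and $X_1$ is an ACR species of it.
   Context: A deterministic reaction network system $(\mathcal S,\mathcal C,\mathcal R,\mathcal K)$ with species $S_1,\dots,S_n$ is modeled by an ODE $\frac{d}{dt}x(t)=f(x(t))$ with $f(x)=\sum_{y\to y'\in\mathcal R}\kappa_{y\to y'}\eta_y(x)(y'-y)$ for rate functions $\eta_y$ (e.g. mass action $\eta_y(x)=x^y=\prod_i x_i^{y_i}$). Such a system is an ACR system if it admits a positive steady state and there is a species whose value is the same at every positive steady state (that species is an ACR species). A deterministic system $\frac{d}{dt}\hat x=\hat f(\hat x)$ is a $Z$-definite ACR system if $Z$ is one of its species and there is $c>0$ such that for every positive vector $\hat x$ with $\hat f_Z(\hat x)=0$ (the component of $\hat f$ for $Z$), the $X_1$-coordinate of $\hat x$ equals $c$ (here $X_1$ is a species of the system). Union system: if $\mathcal S=\{X_1,\dots,X_d,Y_1,\dots,Y_k\}$ and $\hat{\mathcal S}=\{X_1,\dots,X_d,Z_1,\dots,Z_{\hat k}\}$ with ODEs $x'=f(x)$,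 $\hat x'=\hat f(\hat x)$, the union system is the ODE on $\bar x=(x_1,\dots,x_d,y_1,\dots,y_k,z_1,\dots,z_{\hat k})$ given by $\bar x'=Ef+\hat E\hat f$, i.e. the right-hand sides of both systems are added on shared species, while species belonging to only one system evolve by that system's right-hand side (evaluated at the corresponding coordinates). *)

From HB Require Import structures.
From mathcomp Require Import all_boot all_order all_algebra.
Set Implicit Arguments. Unset Strict Implicit. Unset Printing Implicit Defensive.
Import Order.TTheory GRing.Theory Num.Theory.
Local Open Scope ring_scope.

Definition complex (S : finType) := {ffun S -> nat}.

(* A deterministic reaction network system (S, C, R, K) with species type S:
   a list of reactions y -> y' (pairs of complexes; the complexes C are those
   occurring in reactions), positive rate constants kappa_{y->y'}, and rate
   functions eta_y : R^S -> R (arbitrary, e.g. mass action x^y). *)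
Record RNS (R : realFieldType) (S : finType) := {
  rxns : seq (complex S * complex S);
  rconst : complex S * complex S -> R;
  rconst_pos : forall r, r \in rxns -> 0 < rconst r;
  eta : complex S -> (S -> R) -> R
}.

Definition rhs (R : realFieldType) (S : finType) (N : RNS R S)
  (x : S -> R) (i : S) : R :=
  \sum_(r <- rxns N) rconst N r * eta N r.1 x * ((r.2 i)%:R - (r.1 i)%:R).

Definition positive (S : Type) (R : realFieldType) (x : S -> R) :=
  forall s, 0 < x s.

Definition has_pos_ss (R : realFieldType) (S : Type) (F : (S -> R) -> (S -> R)) :=
  exists x : S -> R, positive x /\ forall s, F x s = 0.

Definition ACR_species (R : realFieldType) (S : Type)
  (F : (S -> R) -> (S -> R)) (s : S) :=
  forall x y : S -> R, positive x -> positive y ->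
    (forall i, F x i = 0) -> (forall i, F y i = 0) -> x s = y s.

Definition ACR_system (R : realFieldType) (S : Type) (F : (S -> R) -> (S -> R)) :=
  has_pos_ss F /\ exists s, ACR_species F s.

Definition Zdefinite_ACR (R : realFieldType) (S : Type)
  (F : (S -> R) -> (S -> R)) (Z X1 : S) :=
  exists2 c : R, 0 < c & forall x : S -> R, positive x -> F x Z = 0 -> x X1 = c.

(* Union system.  First system has species X + Y, second X + Zs (X shared).
   The union has species (X + Y) + Zs. *)
Definition proj1u (R : Type) (X Y Zs : Type) (u : (X + Y) + Zs -> R) : X + Y -> R :=
  fun s => u (inl s).
Definition proj2u (R : Type) (X Y Zs : Type) (u : (X + Y) + Zs -> R) : X + Zs -> R :=
  fun s => match s with inl x => u (inl (inl x)) | inr z => u (inr z) end.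

Definition union_rhs (R : realFieldType) (X Y Zs : Type)
  (f : (X + Y -> R) -> (X + Y -> R)) (fh : (X + Zs -> R) -> (X + Zs -> R))
  (u : (X + Y) + Zs -> R) (s : (X + Y) + Zs) : R :=
  match s with
  | inl (inl x) => f (proj1u u) (inl x) + fh (proj2u u) (inl x)
  | inl (inr y) => f (proj1u u) (inr y)
  | inr z => fh (proj2u u) (inr z)
  end.

From HB Require Import structures.
From mathcomp Require Import all_boot all_order all_algebra.
Set Implicit Arguments. Unset Strict Implicit. Unset Printing Implicit Defensive.
Import Order.TTheory GRing.Theory Num.Theory.
Local Open Scope ring_scope.

(* Since Z is not a species of the first system, the Z-component of the union
   vector field at u is the Z-component of the second system at the projection
   of u.  So at every positive steady state of the union the projected state
   annihilates the Z-component of the second system, and Z-definiteness forces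
   its X1-coordinate, which is that of u, to equal the same constant c. *)

Lemma ACR_species_const (R : realFieldType) (S : Type)
    (F : (S -> R) -> (S -> R)) (s : S) (c : R) :
  (forall x, positive x -> (forall i, F x i = 0) -> x s = c) ->
  ACR_species F s.
Proof. by move=> Fc x y px py Fx Fy; rewrite (Fc x) ?(Fc y). Qed.

Lemma ACR_system_species (R : realFieldType) (S : Type)
    (F : (S -> R) -> (S -> R)) (s : S) :
  has_pos_ss F -> ACR_species F s -> ACR_system F.
Proof. by move=> ssF acrF; split; last exists s. Qed.

Lemma positive_proj2u (R : realFieldType) (X Y Zs : Type)
    (u : (X + Y) + Zs -> R) :
  positive u -> positive (proj2u u).
Proof. by move=> pu [x|z]; apply: pu. Qed.

Lemma union_ss_definite (R : realFieldType) (X Y Zs : Type)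
    (f : (X + Y -> R) -> (X + Y -> R)) (fh : (X + Zs -> R) -> (X + Zs -> R))
    (Z : Zs) (X1 : X) (c : R) :
  (forall x, positive x -> fh x (inr Z) = 0 -> x (inl X1) = c) ->
  forall u, positive u -> (forall i, union_rhs f fh u i = 0) ->
    u (inl (inl X1)) = c.
Proof. by move=> fhc u pu ssu; exact: fhc (positive_proj2u pu) (ssu (inr Z)). Qed.

Theorem mainTheorem1 (R : realFieldType) (X Y Zs : finType) (X1 : X) (Z : Zs)
  (N : RNS R (X + Y)%type) (Nh : RNS R (X + Zs)%type) :
  Zdefinite_ACR (rhs Nh) (inr Z) (inl X1) ->
  has_pos_ss (union_rhs (rhs N) (rhs Nh)) ->
  ACR_system (union_rhs (rhs N) (rhs Nh)) /\
  ACR_species (union_rhs (rhs N) (rhs Nh)) (inl (inl X1)).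
Proof.
move=> [c _ Nhc] ssU.
have acrX1 : ACR_species (union_rhs (rhs N) (rhs Nh)) (inl (inl X1)).
  exact: (ACR_species_const (union_ss_definite Nhc)).
by split; first exact: ACR_system_species ssU acrX1.
Qed.
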